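(* Let $P$ be an arithmetic doctrine on $\mathcal C$ with comprehensive diagonals. If $P$ satisfies both $(\mathrm{AC}_{\mathbf N})$ and $(\mathbf{TCT})$, then $P$ satisfies $(\mathbf{CT})$.
   Context: $P$ is arithmetic if it is a weak hyperdoctrine (elementary doctrine over a weakly cartesian closed base, with Heyting fibres and reindexing, and left and right adjoints $\exists,\forall$ to reindexing along product projections satisfying Beck–Chevalley) and $\mathcal C$ has a parameterized natural number object $(\mathbf N,0,s)$ satisfying induction in $P$. $(\mathrm{AC}_{\mathbf N})$: for every $B$ and $R\in P(\mathbf N\times B)$, $\forall a:\mathbf N.\exists b:B.R(a,b)\vdash\exists f:W.\forall a:\mathbf N.R(a,ev(f,a))$ for a weak evaluation $ev:W\times\mathbf N\to B$. Let $T,U$ represent Kleene's primitive recursive T-predicate (0/1-valued) and output function. $(\mathbf{TCT})$: for some weak exponential $W$ of $\mathbf N$ with $\mathbf N$ with weak evaluation $ev$, $\vdash\forall f:W.\exists e.\forall x.\exists y.[(T(e,x,y)=_{\mathbf N}s(0))\wedge(U(y)=_{\mathbf N}ev(f,x))]$. $(\mathbf{CT})$: for every $R\in P(\mathbf N\times\mathbf N)$, $\vdash\forall x.\exists n.R(x,n)\Rightarrow\exists e.\forall x.\exists y.[(T(e,x,y)=s(0))\wedge R(x,U(y))]$. *)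

Set Implicit Arguments.
Unset Strict Implicit.

Record CartCat := {
  ob :> Type;
  hom : ob -> ob -> Type;
  idm : forall A : ob, hom A A;
  comp : forall {A B D : ob}, hom B D -> hom A B -> hom A D;
  comp_id_l : forall A B (f : hom A B), comp (idm B) f = f;
  comp_id_r : forall A B (f : hom A B), comp f (idm A) = f;
  comp_assoc : forall A B D E (f : hom A B) (g : hom B D) (h : hom D E),
      comp h (comp g f) = comp (comp h g) f;
  one : ob;
  bang : forall {A : ob}, hom A one;
  bang_uniq : forall A (f : hom A one), f = bang;
  prod : ob -> ob -> ob;
  pr1 : forall {A B : ob}, hom (prod A B) A;
  pr2 : forall {A B : ob}, hom (prod A B) B;
  pair : forall {X A B : ob}, hom X A -> hom X B -> hom X (prod A B);
  pair_pr1 : forall X A B (f : hom X A) (g : hom X B), comp pr1 (pair f g) = f;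
  pair_pr2 : forall X A B (f : hom X A) (g : hom X B), comp pr2 (pair f g) = g;
  pair_uniq : forall X A B (h : hom X (prod A B)), pair (comp pr1 h) (comp pr2 h) = h
}.
Arguments idm {c} A.
Arguments one {c}.

Definition fprod (C : CartCat) (A B A' B' : C) (f : hom A A') (g : hom B B')
  : hom (prod A B) (prod A' B') := pair (comp f pr1) (comp g pr2).

Definition weak_exp (C : CartCat) (A B W : C) (ev : hom (prod W A) B) : Prop :=
  forall (X : C) (f : hom (prod X A) B),
    exists h : hom X W, comp ev (fprod h (idm A)) = f.

Definition weakly_cc (C : CartCat) : Prop :=
  forall A B : C, exists (W : C) (ev : hom (prod W A) B), weak_exp ev.

(** * Weak hyperdoctrines over C
    Fibres are preorders (entailment ⊢); the doctrine is P(A)/≡. *)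
Record WeakHyperdoctrine (C : CartCat) := {
  fib : C -> Type;
  ent : forall {A : C}, fib A -> fib A -> Prop;
  ent_refl : forall A (a : fib A), ent a a;
  ent_trans : forall A (a b c : fib A), ent a b -> ent b c -> ent a c;
  re : forall {A B : C}, hom A B -> fib B -> fib A;
  re_mono : forall A B (f : hom A B) a b, ent a b -> ent (re f a) (re f b);
  re_id : forall A (a : fib A), ent (re (idm A) a) a /\ ent a (re (idm A) a);
  re_comp : forall A B D (f : hom A B) (g : hom B D) (a : fib D),
      ent (re (comp g f) a) (re f (re g a)) /\ ent (re f (re g a)) (re (comp g f) a);
  top : forall A : C, fib A;
  bot : forall A : C, fib A;
  meet : forall {A : C}, fib A -> fib A -> fib A;
  join : forall {A : C}, fib A -> fib A -> fib A;
  imp : forall {A : C}, fib A -> fib A -> fib A;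
  top_max : forall A (a : fib A), ent a (top A);
  bot_min : forall A (a : fib A), ent (bot A) a;
  meet_l1 : forall A (a b : fib A), ent (meet a b) a;
  meet_l2 : forall A (a b : fib A), ent (meet a b) b;
  meet_r : forall A (a b c : fib A), ent c a -> ent c b -> ent c (meet a b);
  join_r1 : forall A (a b : fib A), ent a (join a b);
  join_r2 : forall A (a b : fib A), ent b (join a b);
  join_l : forall A (a b c : fib A), ent a c -> ent b c -> ent (join a b) c;
  imp_adj : forall A (a b c : fib A), ent (meet c a) b <-> ent c (imp a b);
  re_top : forall A B (f : hom A B), ent (top A) (re f (top B));
  re_bot : forall A B (f : hom A B), ent (re f (bot B)) (bot A);
  re_meet : forall A B (f : hom A B) (a b : fib B),
      ent (meet (re f a) (re f b)) (re f (meet a b));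
  re_join : forall A B (f : hom A B) (a b : fib B),
      ent (re f (join a b)) (join (re f a) (re f b));
  re_imp : forall A B (f : hom A B) (a b : fib B),
      ent (re f (imp a b)) (imp (re f a) (re f b))
      /\ ent (imp (re f a) (re f b)) (re f (imp a b));
  ex : forall {A B : C}, fib (prod A B) -> fib A;
  fa : forall {A B : C}, fib (prod A B) -> fib A;
  ex_adj : forall A B (a : fib (prod A B)) (b : fib A),
      ent (ex a) b <-> ent a (re pr1 b);
  fa_adj : forall A B (a : fib (prod A B)) (b : fib A),
      ent (re pr1 b) a <-> ent b (fa a);
  ex_BC : forall X A B (f : hom X A) (a : fib (prod A B)),
      ent (re f (ex a)) (ex (re (fprod f (idm B)) a))
      /\ ent (ex (re (fprod f (idm B)) a)) (re f (ex a));
  fa_BC : forall X A B (f : hom X A) (a : fib (prod A B)),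
      ent (re f (fa a)) (fa (re (fprod f (idm B)) a))
      /\ ent (fa (re (fprod f (idm B)) a)) (re f (fa a));
  (* elementary structure (Lawvere / Maietti–Rosolini): the map
     α ↦ P_<pr1,pr1∘pr2>(α) ∧ P_pr2(δ_A) : P(X×A) -> P(X×(A×A)) is left adjoint to
     reindexing along id_X × Δ_A. *)
  eqd : forall A : C, fib (prod A A);
  eqd_adj : forall (X A : C) (a : fib (prod X A)) (b : fib (prod X (prod A A))),
      ent (meet (re (pair pr1 (comp pr1 pr2)) a) (re pr2 (eqd A))) b
      <-> ent a (re (pair pr1 (pair pr2 pr2) : hom (prod X A) (prod X (prod A A))) b)
}.
Arguments top {C} _ A.
Arguments bot {C} _ A.
Arguments eqd {C} _ A.
Arguments fib {C} _ _.
Arguments ent {C} _ {A} _ _.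
Arguments re {C} _ {A B} _ _.
Arguments meet {C} _ {A} _ _.
Arguments join {C} _ {A} _ _.
Arguments imp {C} _ {A} _ _.
Arguments ex {C} _ {A B} _.
Arguments fa {C} _ {A B} _.

Definition eqP (C : CartCat) (P : WeakHyperdoctrine C) (X A : C) (a b : hom X A) : fib P X :=
  re P (pair a b) (eqd P A).

Arguments eqP {C} P {X A} a b.

Definition comprehensive_diagonals (C : CartCat) (P : WeakHyperdoctrine C) : Prop :=
  forall (X A : C) (f g : hom X A), ent P (top P X) (eqP P f g) -> f = g.

Arguments comprehensive_diagonals {C} P.

Definition is_pnno (C : CartCat) (N : C) (z : hom one N) (s : hom N N) : Prop :=
  forall (X Y : C) (f : hom X Y) (g : hom Y Y),
    exists h : hom (prod X N) Y,
      (comp h (pair (idm X) (comp z bang)) = f /\ comp h (fprod (idm X) s) = comp g h) /\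
      forall h' : hom (prod X N) Y,
        comp h' (pair (idm X) (comp z bang)) = f -> comp h' (fprod (idm X) s) = comp g h' ->
        h' = h.

Arguments is_pnno {C} N z s.

Definition nno_induction (C : CartCat) (P : WeakHyperdoctrine C)
    (N : C) (z : hom one N) (s : hom N N) : Prop :=
  forall (X : C) (g : fib P X) (a : fib P (prod X N)),
    ent P g (re P (pair (idm X) (comp z bang)) a) ->
    ent P (meet P (re P pr1 g) a) (re P (fprod (idm X) s) a) ->
    ent P (re P pr1 g) a.

Arguments nno_induction {C} P N z s.

Definition arithmetic (C : CartCat) (P : WeakHyperdoctrine C)
    (N : C) (z : hom one N) (s : hom N N) : Prop :=
  weakly_cc C /\ is_pnno N z s /\ nno_induction P N z s.

Arguments arithmetic {C} P N z s.

Definition AC_N (C : CartCat) (P : WeakHyperdoctrine C) (N : C) : Prop :=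
  forall (B : C) (R : fib P (prod N B)),
    exists (W : C) (ev : hom (prod W N) B), weak_exp ev /\
      ent P
        (* ∀a:N. ∃b:B. R(a,b) *)
        (fa P (A:=one) (B:=N)
           (ex P (A:=prod one N) (B:=B)
              (re P (pair (comp pr2 pr1) pr2 : hom (prod (prod one N) B) (prod N B)) R)))
        (* ∃f:W. ∀a:N. R(a, ev(f,a)) *)
        (ex P (A:=one) (B:=W)
           (fa P (A:=prod one W) (B:=N)
              (re P (pair pr2 (comp ev (pair (comp pr2 pr1) pr2))
                       : hom (prod (prod one W) N) (prod N B)) R))).

Arguments AC_N {C} P N.

Definition TCT (C : CartCat) (P : WeakHyperdoctrine C) (N : C) (z : hom one N) (s : hom N N)
    (T : hom (prod (prod N N) N) N) (U : hom N N) : Prop :=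
  exists (W : C) (ev : hom (prod W N) N), weak_exp ev /\
    ent P (top P one)
      (* ∀f:W. ∃e. ∀x. ∃y. T(e,x,y) = s(0) ∧ U(y) = ev(f,x) ;
         context (((1×W)×N_e)×N_x)×N_y *)
      (fa P (A:=one) (B:=W)
        (ex P (A:=prod one W) (B:=N)
          (fa P (A:=prod (prod one W) N) (B:=N)
            (ex P (A:=prod (prod (prod one W) N) N) (B:=N)
              (let G := prod (prod (prod (prod one W) N) N) N in
               let f : hom G W := comp pr2 (comp pr1 (comp pr1 pr1)) in
               let e : hom G N := comp pr2 (comp pr1 pr1) in
               let x : hom G N := comp pr2 pr1 in
               let y : hom G N := pr2 in
               meet P (eqP P (comp T (pair (pair e x) y)) (comp s (comp z bang)))
                      (eqP P (comp U y) (comp ev (pair f x)))))))).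

Arguments TCT {C} P N z s T U.

Definition CT (C : CartCat) (P : WeakHyperdoctrine C) (N : C) (z : hom one N) (s : hom N N)
    (T : hom (prod (prod N N) N) N) (U : hom N N) : Prop :=
  forall R : fib P (prod N N),
    ent P (top P one)
      (imp P
        (* ∀x. ∃n. R(x,n) *)
        (fa P (A:=one) (B:=N)
           (ex P (A:=prod one N) (B:=N)
              (re P (pair (comp pr2 pr1) pr2 : hom (prod (prod one N) N) (prod N N)) R)))
        (* ∃e. ∀x. ∃y. T(e,x,y) = s(0) ∧ R(x, U(y)) ; context ((1×N_e)×N_x)×N_y *)
        (ex P (A:=one) (B:=N)
          (fa P (A:=prod one N) (B:=N)
            (ex P (A:=prod (prod one N) N) (B:=N)
              (let G := prod (prod (prod one N) N) N in
               let e : hom G N := comp pr2 (comp pr1 pr1) in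
               let x : hom G N := comp pr2 pr1 in
               let y : hom G N := pr2 in
               meet P (eqP P (comp T (pair (pair e x) y)) (comp s (comp z bang)))
                      (re P (pair x (comp U y)) R)))))).

Arguments CT {C} P N z s T U.

(** The choice principle turns the hypothesis [forall x, exists n, R(x,n)] into a
    single element [f] of a weak exponential [N^N] with [forall x, R(x, ev(f,x))].
    The exponential of (TCT) is weak as well, so [ev] factors through its
    evaluation by some [h]; (TCT) applied at [h f] yields an index [e] with
    [forall x, exists y, T(e,x,y) = 1 /\ U(y) = ev(f,x)], and substituting the
    equality into [R(x, ev(f,x))] gives the index required by (CT). *)


Lemma pair_comp (C : CartCat) (X Y A B : C) (f : hom X A) (g : hom X B) (h : hom Y X) :
  comp (pair f g) h = pair (comp f h) (comp g h).
Proof.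
  rewrite <- (pair_uniq (comp (pair f g) h)).
  rewrite !comp_assoc, pair_pr1, pair_pr2. reflexivity.
Qed.

Lemma comp_bang (C : CartCat) (X Y : C) (f : hom X Y) : comp bang f = bang.
Proof. apply bang_uniq. Qed.

Ltac cart_simpl := unfold fprod; repeat (rewrite ?pair_comp, ?comp_id_l, ?comp_id_r,
   ?pair_pr1, ?pair_pr2, ?comp_bang, <- ?comp_assoc).

Section HyperdoctrineLogic.
Context {C : CartCat} (P : WeakHyperdoctrine C).

Lemma re_fold {X Y Z : C} (g : hom Y Z) (h : hom X Y) (f : hom X Z) a :
  comp g h = f -> ent P (re P h (re P g a)) (re P f a).
Proof. intros <-. apply re_comp. Qed.

Lemma re_unfold {X Y Z : C} (g : hom Y Z) (h : hom X Y) (f : hom X Z) a :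
  comp g h = f -> ent P (re P f a) (re P h (re P g a)).
Proof. intros <-. apply re_comp. Qed.

Lemma re_congr {X Y : C} (f g : hom X Y) a : f = g -> ent P (re P f a) (re P g a).
Proof. intros <-. apply ent_refl. Qed.

Lemma meet_comm {A} (a b : fib P A) : ent P (meet P a b) (meet P b a).
Proof. apply meet_r; [apply meet_l2 | apply meet_l1]. Qed.

Lemma re_meet_dist {X Y : C} (f : hom X Y) a b :
  ent P (re P f (meet P a b)) (meet P (re P f a) (re P f b)).
Proof. apply meet_r; apply re_mono; [apply meet_l1 | apply meet_l2]. Qed.

Lemma ex_intro {X A B : C} (f : hom X A) (t : hom X B) (Z : fib P (prod A B)) :
  ent P (re P (pair f t) Z) (re P f (ex P Z)).
Proof.
  assert (unit : ent P Z (re P pr1 (ex P Z))) by apply ex_adj, ent_refl.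
  eapply ent_trans; [apply re_mono, unit | apply re_fold, pair_pr1].
Qed.

Lemma fa_elim {X A B : C} (f : hom X A) (t : hom X B) (Z : fib P (prod A B)) :
  ent P (re P f (fa P Z)) (re P (pair f t) Z).
Proof.
  assert (counit : ent P (re P pr1 (fa P Z)) Z) by apply fa_adj, ent_refl.
  eapply ent_trans; [apply (re_unfold pr1 (pair f t)), pair_pr1 | apply re_mono, counit].
Qed.

Lemma fa_intro {X A B : C} (a : fib P X) (f : hom X A) (Z : fib P (prod A B)) :
  ent P (re P pr1 a) (re P (fprod f (idm B)) Z) -> ent P a (re P f (fa P Z)).
Proof. intro H. eapply ent_trans; [apply fa_adj, H | apply fa_BC]. Qed.

Lemma fa_top_intro {X A B : C} (f : hom X A) (t : hom X B) (Z : fib P (prod A B)) :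
  ent P (top P A) (fa P Z) -> ent P (top P X) (re P (pair f t) Z).
Proof.
  intro H. eapply ent_trans; [apply (re_top P f) | ].
  eapply ent_trans; [apply re_mono, H | apply fa_elim].
Qed.

(* Frobenius reciprocity is obtained from Beck-Chevalley by passing through [imp]. *)
Lemma ex_elim {X A B : C} (a b : fib P X) (f : hom X A) (Z : fib P (prod A B)) :
  ent P (meet P (re P pr1 a) (re P (fprod f (idm B)) Z)) (re P pr1 b) ->
  ent P (meet P a (re P f (ex P Z))) b.
Proof.
  intro H.
  eapply ent_trans.
  { apply meet_r; [apply meet_l1 |].
    eapply ent_trans; [apply meet_l2 | apply (@ex_BC C P _ _ _ f Z)]. }
  eapply ent_trans; [apply meet_comm |]. apply imp_adj, ex_adj.
  eapply ent_trans; [| apply re_imp]. apply imp_adj.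
  eapply ent_trans; [apply meet_comm | exact H].
Qed.

Lemma eqd_subst {G A : C} (phi : fib P (prod G A)) (a1 a2 : hom G A) :
  ent P (meet P (eqP P a1 a2) (re P (pair (idm G) a2) phi)) (re P (pair (idm G) a1) phi).
Proof.
  set (g1 := pair pr1 (comp pr1 pr2) : hom (prod G (prod A A)) (prod G A)).
  set (g2 := pair pr1 (comp pr2 pr2) : hom (prod G (prod A A)) (prod G A)).
  assert (leibniz : ent P (meet P (re P g1 (top P (prod G A))) (re P pr2 (eqd P A)))
                       (imp P (re P g2 phi) (re P g1 phi))).
  { apply eqd_adj. eapply ent_trans; [| apply re_imp]. apply imp_adj.
    eapply ent_trans; [apply meet_l2 |].
    eapply ent_trans; [apply re_fold; reflexivity |].
    apply re_unfold. unfold g1, g2. cart_simpl. reflexivity. }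
  set (m := pair (idm G) (pair a1 a2)).
  assert (at_m : ent P (eqP P a1 a2) (imp P (re P m (re P g2 phi)) (re P m (re P g1 phi)))).
  { eapply ent_trans; [| apply re_imp].
    eapply ent_trans; [| apply (@re_mono C P _ _ m _ _ leibniz)].
    eapply ent_trans; [| apply re_meet]. apply meet_r.
    - eapply ent_trans; [apply top_max |].
      eapply ent_trans; [apply (re_top P m) | apply re_mono, re_top].
    - apply re_unfold. unfold m. cart_simpl. reflexivity. }
  apply imp_adj in at_m.
  eapply ent_trans; [| eapply ent_trans; [exact at_m |]].
  - apply meet_r; [apply meet_l1 |].
    eapply ent_trans; [apply meet_l2 |].
    apply re_unfold. unfold m, g2. cart_simpl. reflexivity.
  - apply re_fold. unfold m, g1. cart_simpl. reflexivity.
Qed.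

Lemma eq_transport {G A B : C} (R : fib P (prod A B)) (x : hom G A) (u v : hom G B) :
  ent P (meet P (eqP P u v) (re P (pair x v) R)) (re P (pair x u) R).
Proof.
  set (phi := re P (pair (comp x pr1) pr2) R).
  assert (unfold_phi : forall w : hom G B,
      ent P (re P (pair x w) R) (re P (pair (idm G) w) phi) /\
      ent P (re P (pair (idm G) w) phi) (re P (pair x w) R)).
  { intro w. split.
    - apply re_unfold. cart_simpl. reflexivity.
    - apply re_fold. cart_simpl. reflexivity. }
  eapply ent_trans; [| eapply ent_trans; [apply (eqd_subst phi u v) | apply unfold_phi]].
  apply meet_r; [apply meet_l1 |].
  eapply ent_trans; [apply meet_l2 | apply unfold_phi].
Qed.

End HyperdoctrineLogic.

Section ChurchThesis.
Context {C : CartCat} (P : WeakHyperdoctrine C) {N : C} (z : hom one N) (s : hom N N)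
  (T : hom (prod (prod N N) N) N) (U : hom N N).

(* In context [f : W]:  exists e, forall x, exists y, T(e,x,y) = s(0) /\ U(y) = ev(f,x). *)
Definition tct_formula {W : C} (ev : hom (prod W N) N) : fib P (prod one W) :=
  ex P (A:=prod one W) (B:=N)
    (fa P (A:=prod (prod one W) N) (B:=N)
      (ex P (A:=prod (prod (prod one W) N) N) (B:=N)
        (let G := prod (prod (prod (prod one W) N) N) N in
         let f : hom G W := comp pr2 (comp pr1 (comp pr1 pr1)) in
         let e : hom G N := comp pr2 (comp pr1 pr1) in
         let x : hom G N := comp pr2 pr1 in
         let y : hom G N := pr2 in
         meet P (eqP P (comp T (pair (pair e x) y)) (comp s (comp z bang)))
                (eqP P (comp U y) (comp ev (pair f x)))))).

(* In context [f : W]:  forall x, R(x, ev(f,x)). *)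
Definition choice_formula (R : fib P (prod N N)) {W : C} (ev : hom (prod W N) N)
  : fib P (prod one W) :=
  fa P (A:=prod one W) (B:=N)
    (re P (pair pr2 (comp ev (pair (comp pr2 pr1) pr2))
             : hom (prod (prod one W) N) (prod N N)) R).

Definition ct_formula (R : fib P (prod N N)) : fib P one :=
  ex P (A:=one) (B:=N)
    (fa P (A:=prod one N) (B:=N)
      (ex P (A:=prod (prod one N) N) (B:=N)
        (let G := prod (prod (prod one N) N) N in
         let e : hom G N := comp pr2 (comp pr1 pr1) in
         let x : hom G N := comp pr2 pr1 in
         let y : hom G N := pr2 in
         meet P (eqP P (comp T (pair (pair e x) y)) (comp s (comp z bang)))
                (re P (pair x (comp U y)) R)))).

Lemma ct_of_tracked_choice (R : fib P (prod N N)) {W1 W2 : C}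
    {ev1 : hom (prod W1 N) N} {ev2 : hom (prod W2 N) N} {h : hom W1 W2} :
  comp ev2 (fprod h (idm N)) = ev1 ->
  ent P (meet P (choice_formula R ev1) (re P (pair pr1 (comp h pr2)) (tct_formula ev2)))
        (re P pr1 (ct_formula R)).
Proof.
  intro Hh. apply ex_elim.
  eapply ent_trans; [| apply (re_unfold P pr1 pr1 (comp pr1 pr1)); reflexivity].
  eapply ent_trans; [| apply (ex_intro P (comp pr1 pr1) pr2)].
  apply fa_intro.
  eapply ent_trans; [apply re_meet_dist |].
  eapply ent_trans.
  { apply meet_r.
    - eapply ent_trans; [apply meet_l1 |].
      eapply ent_trans; [apply re_fold; reflexivity |].
      eapply ent_trans; [apply (fa_elim P _ pr2) | apply re_fold; reflexivity].
    - eapply ent_trans; [apply meet_l2 |].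
      eapply ent_trans; [apply re_fold; reflexivity | apply (fa_elim P _ pr2)]. }
  apply ex_elim.
  eapply ent_trans; [| apply re_unfold; reflexivity].
  eapply ent_trans; [| apply (ex_intro P _ pr2)].
  eapply ent_trans; [| apply re_meet]. apply meet_r.
  - eapply ent_trans; [apply meet_l2 |].
    eapply ent_trans; [apply re_meet_dist |].
    eapply ent_trans; [apply meet_l1 |]. unfold eqP.
    eapply ent_trans; [apply re_fold; reflexivity |].
    apply re_unfold. cart_simpl. reflexivity.
  - set (x := comp pr2 pr1 : hom (prod (prod (prod (prod one W1) N) N) N) N).
    set (w := comp pr2 (comp pr1 (comp pr1 pr1))
              : hom (prod (prod (prod (prod one W1) N) N) N) W1).
    eapply ent_trans; [| eapply ent_trans;
      [apply (eq_transport P R x (comp U pr2) (comp ev1 (pair w x))) |]].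
    2: { apply re_unfold. unfold x. cart_simpl. reflexivity. }
    apply meet_r.
    (* [U(y) = ev2(h w, x)] is [U(y) = ev1(w, x)] by the factorisation [Hh]. *)
    + eapply ent_trans; [apply meet_l2 |].
      eapply ent_trans; [apply re_meet_dist |].
      eapply ent_trans; [apply meet_l2 |]. unfold eqP.
      eapply ent_trans; [apply re_fold; reflexivity |].
      apply re_congr. rewrite <- Hh. unfold x, w. cart_simpl. reflexivity.
    + eapply ent_trans; [apply meet_l1 |].
      eapply ent_trans; [apply re_fold; reflexivity |].
      apply re_congr. unfold x, w. cart_simpl. reflexivity.
Qed.

End ChurchThesis.

Theorem proposition3p14 (C : CartCat) (P : WeakHyperdoctrine C)
    (N : C) (z : hom one N) (s : hom N N)
    (T : hom (prod (prod N N) N) N) (U : hom N N) :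
  arithmetic P N z s ->
  comprehensive_diagonals P ->
  AC_N P N ->
  TCT P N z s T U ->
  CT P N z s T U.
Proof.
  intros _ _ choice [W2 [ev2 [weak_exp2 tct]]] R.
  destruct (choice N R) as [W1 [ev1 [_ choice_R]]].
  destruct (weak_exp2 W1 ev1) as [h factor_h].
  change (ent P (top P one) (fa P (tct_formula P z s T U ev2))) in tct.
  change (ent P (top P one) (imp P (fa P (ex P (re P (pair (comp pr2 pr1) pr2) R)))
                                   (ct_formula P z s T U R))).
  apply imp_adj.
  eapply ent_trans; [apply meet_l2 |].
  eapply ent_trans; [apply choice_R |].
  apply ex_adj.
  eapply ent_trans; [| apply (ct_of_tracked_choice P z s T U R factor_h)].
  apply meet_r; [apply ent_refl |].
  eapply ent_trans; [apply top_max | apply (fa_top_intro P pr1 (comp h pr2) _ tct)].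
Qed.
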